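(* Let $A$ be a commutative unital $\mathbb{K}$-algebra. Then $(T^+(A),\bar\bullet^\ell,P_A)$, together with the unital algebra morphism $i_A:A\to T^+(A)$, $i_A(a)=a\otimes1_{\mathbb{K}}$, is the free unital commutative $TD$-algebra over $A$: for every unital commutative $TD$-algebra $(B,P)$ and every unital algebra morphism $\phi:A\to B$ there exists a unique $TD$-algebra morphism $\tilde\phi:T^+(A)\to B$ with $\tilde\phi\circ i_A=\phi$. (It is given by $\tilde\phi(a_1\otimes a_2\otimes\cdots\otimes a_n)=\phi(a_1)\,P\bigl(\tilde\phi(a_2\otimes\cdots\otimes a_n)\bigr)$.)
   Context: $\mathbb{K}$ is a field of characteristic $0$, $A$ has product $[a;b]$ and unit $1_A$. $T(A)=\bigoplus_{n\ge0}A^{\otimes n}$ with $A^{\otimes0}=\mathbb{K}1_{\mathbb{K}}$; $a\otimes1_{\mathbb{K}}$ is identified with $a$. The left-shift shuffle $\bullet^\ell$ is the bilinear product on $T(A)$ with $k1_{\mathbb{K}}\bullet^\ell U=kU=U\bullet^\ell k1_{\mathbb{K}}$ and, for $a,b\in A$, $U,V\in T(A)$, $(a\otimes U)\bullet^\ell(b\otimes V)=a\otimes\bigl(U\bullet^\ell(b\otimes V)\bigr)+b\otimes\bigl((a\otimes U)\bullet^\ell V\bigr)-[a;b]\otimes1_A\otimes(U\bullet^\ell V)$. $T^+(A):=A\otimes T(A)=\bigoplus_{n\ge1}A^{\otimes n}$ with product $(a\otimes U)\,\bar\bullet^\ell\,(b\otimes V):=[a;b]\otimes(U\bullet^\ell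 V)$ and unit $1_A\otimes1_{\mathbb{K}}$. $P_A:T^+(A)\to T^+(A)$ is the linear map $P_A(a_1\otimes\cdots\otimes a_n)=1_A\otimes a_1\otimes\cdots\otimes a_n$. A $TD$-algebra is a pair $(B,P)$, $B$ a unital associative algebra, $P:B\to B$ linear with $P(x)P(y)=P\bigl(P(x)y+xP(y)\bigr)-P\bigl(x\,P(1_B)\,y\bigr)$ for all $x,y$. A $TD$-algebra morphism $(B_1,P_1)\to(B_2,P_2)$ is a unital algebra homomorphism $f$ with $fP_1=P_2f$. *)

From HB Require Import structures.
From mathcomp Require Import all_boot all_order all_algebra.
From mathcomp Require Import finmap.
From mathcomp.multinomials Require Import monalg.
Set Implicit Arguments. Unset Strict Implicit. Unset Printing Implicit Defensive.
Import GRing.Theory.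
Local Open Scope ring_scope.

(* T(A)   is modelled as the free K-module on words (seq A) modulo the
          multilinearity relations; the word [:: a1; ..; an] stands for
          a1 (x) ... (x) an and [::] for 1_K.
   T^+(A) = A (x) T(A) is modelled as the free K-module on pairs
          (a, w) : A * seq A (standing for a (x) w), modulo the same
          relations (transported along (a,w) |-> a :: w). *)

Section TensorModel.
Variables (K : fieldType) (A : comAlgType K).

Definition Tfree := {malg K[seq A]}.
Definition Tplus := {malg K[(A * seq A)%type]}.

Definition lin_ext (W : choiceType) (V : lmodType K) (h : W -> V)
  (x : {malg K[W]}) : V := \sum_(w <- msupp x) x@_w *: h w.

Definition bilin_ext (W1 W2 : choiceType) (V : lmodType K) (h : W1 -> W2 -> V)
  (x : {malg K[W1]}) (y : {malg K[W2]}) : V :=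
  \sum_(u <- msupp x) \sum_(v <- msupp y) (x@_u * y@_v) *: h u v.

Definition consm (a : A) : Tfree -> Tfree :=
  lin_ext (fun w : seq A => (<< a :: w >> : Tfree)).

Fixpoint sh (u : seq A) : seq A -> Tfree :=
  match u with
  | [::] => fun v => << v >>
  | a :: u' =>
      fix shv (v : seq A) : Tfree :=
        match v with
        | [::] => << a :: u' >>
        | b :: v' => consm a (sh u' v) + consm b (shv v')
                     - consm (a * b) (consm 1 (sh u' v'))
        end
  end.

Definition shuffle : Tfree -> Tfree -> Tfree := bilin_ext sh.

Definition tplus_of (c : A) : Tfree -> Tplus :=
  lin_ext (fun w : seq A => (<< (c, w) >> : Tplus)).

Definition tmul : Tplus -> Tplus -> Tplus :=
  bilin_ext (fun p q : A * seq A => tplus_of (p.1 * q.1) (sh p.2 q.2)).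

Definition tone : Tplus := << (1, [::]) >>.

Definition PA : Tplus -> Tplus :=
  lin_ext (fun p : A * seq A => (<< (1, p.1 :: p.2) >> : Tplus)).

Definition iA (a : A) : Tplus := << (a, [::]) >>.

Inductive in_N : Tfree -> Prop :=
  | N_add (w1 w2 : seq A) (x y : A) :
      in_N (<< w1 ++ (x + y) :: w2 >> - << w1 ++ x :: w2 >> - << w1 ++ y :: w2 >>)
  | N_scale (w1 w2 : seq A) (k : K) (x : A) :
      in_N (<< w1 ++ (k *: x) :: w2 >> - k *: << w1 ++ x :: w2 >>)
  | N_zero : in_N 0
  | N_plus x y : in_N x -> in_N y -> in_N (x + y)
  | N_scal k x : in_N x -> in_N (k *: x).

Definition emb : Tplus -> Tfree :=
  lin_ext (fun p : A * seq A => (<< p.1 :: p.2 >> : Tfree)).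

Definition tequiv (x y : Tplus) : Prop := in_N (emb (x - y)).

Definition TD_identity (B : comAlgType K) (P : B -> B) : Prop :=
  forall x y : B, P x * P y = P (P x * y + x * P y) - P (x * P 1 * y).

Definition TD_morphism (B : comAlgType K) (P : B -> B) (f : Tplus -> B) : Prop :=
  [/\ forall x y, tequiv x y -> f x = f y,
      forall (k : K) x y, f (k *: x + y) = k *: f x + f y,
      forall x y, f (tmul x y) = f x * f y,
      f tone = 1
    & forall x, f (PA x) = P (f x)].

End TensorModel.

From Pilot Require Import Defs.
From HB Require Import structures.
From mathcomp Require Import all_boot all_order all_algebra.
From mathcomp Require Import finmap.
From mathcomp.multinomials Require Import monalg.
From mathcomp Require Import ssrAC zify ring.
Import GRing.Theory.
Local Open Scope ring_scope.
Set Implicit Arguments. Unset Strict Implicit. Unset Printing Implicit Defensive.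

(* Shuffles of words are commutative, and associative because the triple
   product (u . v) . w unfolds into a recursion that is invariant under rotating
   (u, v, w).  The product of T^+(A) multiplies the first letters and shuffles
   the tails, so it inherits these laws, and on basis words the TD identity for
   P_A is the defining recursion of the shuffle read after the first letter 1_A.
   The relations defining the tensor powers are stable under a (x) _, hence under
   the product read through the inclusion T^+(A) -> T(A), so everything descends
   to the quotient.  The extension of phi is
   a1 (x) ... (x) an |-> phi a1 * P (phi a2 * P (... P (phi an)));
   it kills the relations, it is multiplicative by the TD identity, and it is
   forced because a (x) w = i_A(a) bar. P_A(w). *)

Section LinearFunctions.
Variable K : fieldType.

Section Consequences.
Variables (U V : lmodType K) (F : U -> V).
Hypothesis F_linear : linear F.

Lemma linear_fun0 : F 0 = 0.
Proof.
have := F_linear 1 0 0; rewrite !scale1r addr0 => F00.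
by apply/(addrI (F 0)); rewrite addr0 -F00.
Qed.

Lemma linear_funD x y : F (x + y) = F x + F y.
Proof. by have := F_linear 1 x y; rewrite !scale1r. Qed.

Lemma linear_funZ k x : F (k *: x) = k *: F x.
Proof. by have := F_linear k x 0; rewrite !addr0 linear_fun0 addr0. Qed.

Lemma linear_fun_sum (I : Type) (r : seq I) (G : I -> U) :
  F (\sum_(i <- r) G i) = \sum_(i <- r) F (G i).
Proof.
elim: r => [|i r IH]; first by rewrite !big_nil linear_fun0.
by rewrite !big_cons linear_funD IH.
Qed.
End Consequences.

Lemma linear_id (U : lmodType K) : linear (fun x : U => x).
Proof. by []. Qed.

Lemma linear_cst0 (U V : lmodType K) : linear (fun _ : U => 0 : V).
Proof. by move=> k x y; rewrite scaler0 addr0. Qed.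

Lemma linear_comp (U V W : lmodType K) (F : V -> W) (G : U -> V) :
  linear F -> linear G -> linear (fun x => F (G x)).
Proof. by move=> hF hG k x y; rewrite hG hF. Qed.

Lemma linear_add (U V : lmodType K) (F G : U -> V) :
  linear F -> linear G -> linear (fun x => F x + G x).
Proof. by move=> hF hG k x y; rewrite hF hG scalerDr addrACA. Qed.

Lemma linear_opp (U V : lmodType K) (F : U -> V) :
  linear F -> linear (fun x => - F x).
Proof. by move=> hF k x y; rewrite hF opprD scalerN. Qed.

Lemma linear_sub (U V : lmodType K) (F G : U -> V) :
  linear F -> linear G -> linear (fun x => F x - G x).
Proof. by move=> hF hG; apply: linear_add (linear_opp hG). Qed.

Lemma linear_scale (U V : lmodType K) (k : K) (F : U -> V) :
  linear F -> linear (fun x => k *: F x).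
Proof. by move=> hF c x y; rewrite hF scalerDr !scalerA mulrC. Qed.

Lemma linear_linear_fun (U V : lmodType K) (F : {linear U -> V}) : linear F.
Proof. by move=> k x y; rewrite linearP. Qed.

Lemma linear_bilinearl (U U' V : lmodType K) (F : {bilinear U -> U' -> V}) y :
  linear (F^~ y).
Proof. by move=> k x x'; rewrite linearPl. Qed.

Lemma linear_bilinearr (U U' V : lmodType K) (F : {bilinear U -> U' -> V}) x :
  linear (F x).
Proof. by move=> k y y'; rewrite linearPr. Qed.

Section LinearExtension.
Variables (W : choiceType) (V : lmodType K).
Implicit Types (h : W -> V) (x : {malg K[W]}).

Lemma lin_extEw h x (d : {fset W}) : (msupp x `<=` d)%fset ->
  lin_ext h x = \sum_(w <- d) x@_w *: h w.
Proof.
move=> le_xd; rewrite /lin_ext (big_fset_incl _ le_xd) //= => w _ /mcoeff_outdom ->.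
by rewrite scale0r.
Qed.

Lemma linear_lin_ext h : linear (lin_ext h).
Proof.
move=> k x y; set d := (msupp x `|` msupp y)%fset.
have le_xd : (msupp x `<=` d)%fset by apply: fsubsetUl.
have le_yd : (msupp y `<=` d)%fset by apply: fsubsetUr.
have le_kxy_d : (msupp (k *: x + y) `<=` d)%fset.
  apply: fsubset_trans (msuppD_le _ _) _; apply: fsetUSS => //.
  exact: fsubset_trans (msuppZ_le _ _) _.
rewrite !(lin_extEw h le_xd, lin_extEw h le_yd, lin_extEw h le_kxy_d).
rewrite scaler_sumr -big_split /=; apply: eq_bigr => w _.
by rewrite mcoeffD mcoeffZ scalerDl scalerA.
Qed.

HB.instance Definition _ h :=
  GRing.isLinear.Build K {malg K[W]} V _ (lin_ext h) (linear_lin_ext h).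

Lemma lin_extU h w : lin_ext h << w >> = h w.
Proof. by rewrite (lin_extEw h msuppU_le) big_seq_fset1 mcoeffUU scale1r. Qed.

Lemma monalgUZ (c : K) (w : W) : << c *g w >> = c *: (<< w >> : {malg K[W]}).
Proof.
by apply/malgP => w'; rewrite mcoeffZ !mcoeffU; case: (w == w'); rewrite ?mulr1 ?mulr0.
Qed.

Lemma linear_eq_on_basis (F G : {malg K[W]} -> V) : linear F -> linear G ->
  (forall w, F << w >> = G << w >>) -> F =1 G.
Proof.
move=> hF hG eFG x; rewrite (monalgE x) !linear_fun_sum //.
by apply: eq_bigr => w _; rewrite monalgUZ !linear_funZ // eFG.
Qed.

Lemma lin_ext_combination (k : K) (h1 h2 : W -> V) x :
  lin_ext (fun w => k *: h1 w + h2 w) x = k *: lin_ext h1 x + lin_ext h2 x.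
Proof.
rewrite /lin_ext scaler_sumr -big_split /=; apply: eq_bigr => w _.
by rewrite scalerDr !scalerA mulrC.
Qed.

Lemma eq_lin_ext (h1 h2 : W -> V) : h1 =1 h2 -> lin_ext h1 =1 lin_ext h2.
Proof. by move=> e x; apply: eq_bigr => w _; rewrite e. Qed.
End LinearExtension.

Section BilinearExtension.
Variables (W1 W2 : choiceType) (V : lmodType K) (h : W1 -> W2 -> V).

Lemma bilin_extE x y : bilin_ext h x y = lin_ext (fun u => lin_ext (h u) y) x.
Proof.
apply: eq_bigr => u _; rewrite scaler_sumr.
by apply: eq_bigr => v _; rewrite scalerA.
Qed.

Lemma bilinear_bilin_ext : bilinear_for *:%R *:%R (bilin_ext h).
Proof.
split=> [y k x x' | x k y y']; rewrite !bilin_extE; first exact: linear_lin_ext.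
by rewrite -lin_ext_combination; apply: eq_lin_ext => u; rewrite linearP.
Qed.

HB.instance Definition _ :=
  bilinear_isBilinear.Build K {malg K[W1]} {malg K[W2]} V _ _ (bilin_ext h)
    bilinear_bilin_ext.

Lemma bilin_extU u v : bilin_ext h << u >> << v >> = h u v.
Proof. by rewrite bilin_extE !lin_extU. Qed.
End BilinearExtension.
End LinearFunctions.

Create HintDb linearity.
#[export] Hint Resolve linear_id linear_cst0 : linearity.
#[export] Hint Extern 1 (linear _) => apply: linear_linear_fun : linearity.
#[export] Hint Extern 1 (linear _) => apply: linear_bilinearl : linearity.
#[export] Hint Extern 1 (linear _) => apply: linear_bilinearr : linearity.

Ltac linearity :=
  repeat first
  [ solve [auto with linearity]
  | apply: linear_add | apply: linear_sub | apply: linear_opp | apply: linear_scale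
  | match goal with
    | |- linear (fun x => ?f (@?g x)) => apply: (linear_comp (F := f) (G := g))
    | |- linear (fun x => ?f (@?g x) ?y) =>
        lazymatch g with (fun x => x) => fail | _ => idtac end;
        apply: (linear_comp (F := fun z => f z y) (G := g))
    end ].

Ltac on_basis := apply: linear_eq_on_basis; [by linearity | by linearity | ].

Section Shuffle.
Variables (K : fieldType) (A : comAlgType K).
Local Notation T := (Tfree A).

(* Locked copies of the operations of Defs: unification would otherwise unfold
   the linear extensions down to finitely supported functions. *)
Fact consmL_key : unit. Proof. by []. Qed.
Definition consmL := locked_with consmL_key (@consm K A).
Lemma consmLE : consmL = @consm K A. Proof. exact: locked_withE. Qed.

Fact shuffleL_key : unit. Proof. by []. Qed.
Definition shuffleL := locked_with shuffleL_key (@shuffle K A).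
Lemma shuffleLE : shuffleL = @shuffle K A. Proof. exact: locked_withE. Qed.

Lemma linear_consmL (a : A) : linear (consmL a).
Proof. by rewrite consmLE; apply: linear_lin_ext. Qed.
HB.instance Definition _ (a : A) :=
  GRing.isLinear.Build K T T _ (consmL a) (linear_consmL a).

Lemma bilinear_shuffleL : bilinear_for *:%R *:%R shuffleL.
Proof. by rewrite shuffleLE; apply: bilinear_bilin_ext. Qed.
HB.instance Definition _ :=
  bilinear_isBilinear.Build K T T T _ _ shuffleL bilinear_shuffleL.

Fact shL_key : unit. Proof. by []. Qed.
Definition shL := locked_with shL_key (@sh K A).
Lemma shLE : shL = @sh K A. Proof. exact: locked_withE. Qed.

Lemma consmU (a : A) w : consmL a << w >> = << a :: w >>.
Proof. by rewrite consmLE; apply: lin_extU. Qed.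

Lemma shuffleU (u v : seq A) : shuffleL << u >> << v >> = shL u v.
Proof. by rewrite shuffleLE shLE; apply: bilin_extU. Qed.

Lemma sh_nil_l (v : seq A) : shL [::] v = << v >>.
Proof. by rewrite shLE. Qed.

Lemma sh_nil_r (u : seq A) : shL u [::] = << u >>.
Proof. by rewrite shLE; case: u. Qed.

Lemma sh_cons (a b : A) u v : shL (a :: u) (b :: v) =
  consmL a (shL u (b :: v)) + consmL b (shL (a :: u) v)
  - consmL (a * b) (consmL 1 (shL u v)).
Proof. by rewrite shLE consmLE. Qed.

Lemma shC (u v : seq A) : shL u v = shL v u.
Proof.
elim: u v => [|a u IHu] v; first by rewrite sh_nil_l sh_nil_r.
elim: v => [|b v IHv]; first by rewrite sh_nil_l sh_nil_r.
by rewrite !sh_cons IHv IHu (IHu v) (addrC (consmL a _)) mulrC.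
Qed.

Lemma shuffleC (x y : T) : shuffleL x y = shuffleL y x.
Proof.
move: x; on_basis => u; move: y; on_basis => v.
by rewrite !shuffleU shC.
Qed.

Lemma shuffle_nil_r (x : T) : shuffleL x << [::] >> = x.
Proof. by move: x; on_basis => u; rewrite shuffleU sh_nil_r. Qed.

Lemma shuffle_consm (a b : A) (S U : T) : shuffleL (consmL a S) (consmL b U) =
  consmL a (shuffleL S (consmL b U)) + consmL b (shuffleL (consmL a S) U)
  - consmL (a * b) (consmL 1 (shuffleL S U)).
Proof.
move: S; on_basis => u; move: U; on_basis => v.
by rewrite !consmU !shuffleU sh_cons.
Qed.

Lemma sh_cons1l (u v : seq A) : shL (1 :: u) v = consmL 1 (shL u v).
Proof.
elim: v => [|b v IH]; first by rewrite !sh_nil_r consmU.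
by rewrite sh_cons IH mul1r addrK.
Qed.

Lemma shuffle_consm1l (S U : T) : shuffleL (consmL 1 S) U = consmL 1 (shuffleL S U).
Proof.
move: S; on_basis => u; move: U; on_basis => v.
by rewrite consmU !shuffleU sh_cons1l.
Qed.

Lemma sh_1r (u : seq A) : shL u [:: 1] = << 1 :: u >>.
Proof.
elim: u => [|a u IH]; first by rewrite sh_nil_l.
by rewrite sh_cons IH !sh_nil_r !consmU mulr1 addrAC subrr add0r.
Qed.

Definition sh3 (u v w : seq A) : T := shuffleL (shL u v) << w >>.

Lemma sh3_cons a b c u v w : sh3 (a :: u) (b :: v) (c :: w) =
  consmL a (sh3 u (b :: v) (c :: w)) + consmL b (sh3 (a :: u) v (c :: w))
  + consmL c (sh3 (a :: u) (b :: v) w)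
  - consmL (a * c) (consmL 1 (sh3 u (b :: v) w))
  - consmL (b * c) (consmL 1 (sh3 (a :: u) v w))
  - consmL (a * b) (consmL 1 (sh3 u v (c :: w)))
  + consmL (a * b * c) (consmL 1 (consmL 1 (sh3 u v w))).
Proof.
rewrite /sh3 sh_cons -[<< c :: w >>]consmU !(linearBl, linearDl) /=.
rewrite (shuffle_consm a c) (shuffle_consm b c) (shuffle_consm (a * b) c).
rewrite !shuffle_consm1l !(linearB, linearD) /= ?opprD ?opprK !addrA.
by rewrite [LHS](ACl (1*4*2*5*8*3*6*7*9)).
Qed.

Lemma sh3_nil_l v w : sh3 [::] v w = shL v w.
Proof. by rewrite /sh3 sh_nil_l shuffleU. Qed.

Lemma sh3_nil_m u w : sh3 u [::] w = shL u w.
Proof. by rewrite /sh3 sh_nil_r shuffleU. Qed.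

Lemma sh3_nil_r u v : sh3 u v [::] = shL u v.
Proof. by rewrite /sh3 shuffle_nil_r. Qed.

Lemma sh3_rotate n u v w : (size u + size v + size w <= n)%N -> sh3 u v w = sh3 v w u.
Proof.
elim: n u v w => [|n IH] [|a u] [|b v] [|c w] //= size_le;
  rewrite ?sh3_nil_l ?sh3_nil_m ?sh3_nil_r ?(shC [::]) ?(shC _ [::]) //; try lia.
all: try by rewrite shC.
rewrite !sh3_cons.
rewrite (IH u (b :: v) (c :: w)) /=; last lia.
rewrite (IH (a :: u) v (c :: w)) /=; last lia.
rewrite (IH (a :: u) (b :: v) w) /=; last lia.
rewrite (IH u (b :: v) w) /=; last lia.
rewrite (IH (a :: u) v w) /=; last lia.
rewrite (IH u v (c :: w)) /=; last lia.
rewrite (IH u v w) /=; last lia.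
rewrite (mulrC a c) (mulrC a b) (mulrAC b a c).
by rewrite [LHS](ACl (2*3*1*6*4*5*7)).
Qed.

Lemma sh_assoc (u v w : seq A) : shuffleL (shL u v) << w >> = shuffleL << u >> (shL v w).
Proof. by rewrite [RHS]shuffleC; apply: (@sh3_rotate (size u + size v + size w)). Qed.
End Shuffle.

Section Relations.
Variables (K : fieldType) (A : comAlgType K).
Local Notation T := (Tfree A).

Lemma in_N_opp (x : T) : in_N x -> in_N (- x).
Proof. by move=> Nx; rewrite -scaleN1r; apply: N_scal. Qed.

Lemma in_N_sub (x y : T) : in_N x -> in_N y -> in_N (x - y).
Proof. by move=> Nx Ny; apply: N_plus Nx (in_N_opp Ny). Qed.

Lemma in_N_regroup (a1 a2 a3 b1 b2 b3 c1 c2 c3 : T) :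
  in_N (a1 - a2 - a3) -> in_N (b1 - b2 - b3) -> in_N (c1 - c2 - c3) ->
  in_N ((a1 + b1 - c1) - (a2 + b2 - c2) - (a3 + b3 - c3)).
Proof.
move=> Na Nb Nc; have -> : (a1 + b1 - c1) - (a2 + b2 - c2) - (a3 + b3 - c3) =
    (a1 - a2 - a3) + (b1 - b2 - b3) - (c1 - c2 - c3).
  by rewrite !opprD !opprK !addrA [LHS](ACl (1*4*7*2*5*8*3*6*9)).
exact: in_N_sub (N_plus Na Nb) Nc.
Qed.

Lemma in_N_regroupZ (k : K) (a1 a2 b1 b2 c1 c2 : T) :
  in_N (a1 - k *: a2) -> in_N (b1 - k *: b2) -> in_N (c1 - k *: c2) ->
  in_N ((a1 + b1 - c1) - k *: (a2 + b2 - c2)).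
Proof.
move=> Na Nb Nc; have -> : (a1 + b1 - c1) - k *: (a2 + b2 - c2) =
    (a1 - k *: a2) + (b1 - k *: b2) - (c1 - k *: c2).
  by rewrite !scalerDr scalerN !opprD !opprK !addrA [LHS](ACl (1*4*2*5*3*6)).
exact: in_N_sub (N_plus Na Nb) Nc.
Qed.

Lemma in_N_linear_basis (W : choiceType) (F : {malg K[W]} -> T) : linear F ->
  (forall w, in_N (F << w >>)) -> forall x, in_N (F x).
Proof.
move=> hF Nw x; rewrite (monalgE x) linear_fun_sum //.
apply: big_ind => [|y z|w _]; [exact: N_zero | exact: N_plus |].
by rewrite monalgUZ linear_funZ //; apply: N_scal.
Qed.

Lemma linear_preserves_N (F : T -> T) : linear F ->
  (forall w1 w2 x y, in_N (F (<< w1 ++ (x + y) :: w2 >> - << w1 ++ x :: w2 >>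
                              - << w1 ++ y :: w2 >>))) ->
  (forall w1 w2 k x, in_N (F (<< w1 ++ (k *: x) :: w2 >> - k *: << w1 ++ x :: w2 >>))) ->
  forall X, in_N X -> in_N (F X).
Proof.
move=> hF FD FZ X; elim=> // [|x y _ Nx _ Ny|k x _ Nx].
- by rewrite linear_fun0 //; apply: N_zero.
- by rewrite linear_funD //; apply: N_plus.
- by rewrite linear_funZ //; apply: N_scal.
Qed.

Lemma consm_letterD_N (x y : A) (S : T) :
  in_N (consmL (x + y) S - consmL x S - consmL y S).
Proof.
move: S; apply: in_N_linear_basis; first by linearity.
by move=> w; rewrite !consmU; apply: (N_add [::]).
Qed.

Lemma consm_letterZ_N (k : K) (x : A) (S : T) :
  in_N (consmL (k *: x) S - k *: consmL x S).
Proof.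
move: S; apply: in_N_linear_basis; first by linearity.
by move=> w; rewrite !consmU; apply: (N_scale [::]).
Qed.

Lemma in_N_consm (c : A) (X : T) : in_N X -> in_N (consmL c X).
Proof.
apply: linear_preserves_N; first by linearity.
  by move=> w1 w2 x y; rewrite !linearB /= !consmU; apply: (N_add (c :: w1)).
by move=> w1 w2 k x; rewrite linearB linearZZ /= !consmU; apply: (N_scale (c :: w1)).
Qed.

Lemma sh_letterD_N w1 w2 (x y : A) v :
  in_N (shL (w1 ++ (x + y) :: w2) v - shL (w1 ++ x :: w2) v - shL (w1 ++ y :: w2) v).
Proof.
elim: w1 v => [|a w1 IH] v.
  elim: v => [|b v IHv]; first by rewrite !sh_nil_r; apply: (N_add [::]).
  rewrite /= !sh_cons; apply: in_N_regroup.
  - exact: consm_letterD_N.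
  - by rewrite -!linearB; apply: in_N_consm.
  - by rewrite mulrDl; apply: consm_letterD_N.
elim: v => [|b v IHv]; first by rewrite !sh_nil_r; apply: (N_add (a :: w1)).
rewrite /= !sh_cons; apply: in_N_regroup; rewrite -!linearB.
- exact/in_N_consm/IH.
- exact/in_N_consm.
- exact/in_N_consm/in_N_consm/IH.
Qed.

Lemma sh_letterZ_N w1 w2 (k : K) (x : A) v :
  in_N (shL (w1 ++ (k *: x) :: w2) v - k *: shL (w1 ++ x :: w2) v).
Proof.
elim: w1 v => [|a w1 IH] v.
  elim: v => [|b v IHv]; first by rewrite !sh_nil_r; apply: (N_scale [::]).
  rewrite /= !sh_cons; apply: in_N_regroupZ.
  - exact: consm_letterZ_N.
  - by rewrite -linearZZ -linearB; apply: in_N_consm.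
  - by rewrite -scalerAl; apply: consm_letterZ_N.
elim: v => [|b v IHv]; first by rewrite !sh_nil_r; apply: (N_scale (a :: w1)).
rewrite /= !sh_cons; apply: in_N_regroupZ.
- by rewrite -linearZZ -linearB; apply/in_N_consm/IH.
- by rewrite -linearZZ -linearB; apply: in_N_consm.
- by rewrite -!linearZZ -!linearB; apply/in_N_consm/in_N_consm/IH.
Qed.
End Relations.

Section TensorPlus.
Variables (K : fieldType) (A : comAlgType K).
Local Notation T := (Tfree A).
Local Notation TP := (Tplus A).

Fact tplus_ofL_key : unit. Proof. by []. Qed.
Definition tplus_ofL := locked_with tplus_ofL_key (@tplus_of K A).
Lemma tplus_ofLE : tplus_ofL = @tplus_of K A. Proof. exact: locked_withE. Qed.

Fact tmulL_key : unit. Proof. by []. Qed.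
Definition tmulL := locked_with tmulL_key (@tmul K A).
Lemma tmulLE : tmulL = @tmul K A. Proof. exact: locked_withE. Qed.

Fact PAL_key : unit. Proof. by []. Qed.
Definition PAL := locked_with PAL_key (@PA K A).
Lemma PALE : PAL = @PA K A. Proof. exact: locked_withE. Qed.

Fact embL_key : unit. Proof. by []. Qed.
Definition embL := locked_with embL_key (@emb K A).
Lemma embLE : embL = @emb K A. Proof. exact: locked_withE. Qed.

Lemma linear_tplus_ofL (c : A) : linear (tplus_ofL c).
Proof. by rewrite tplus_ofLE; apply: linear_lin_ext. Qed.
HB.instance Definition _ (c : A) :=
  GRing.isLinear.Build K T TP _ (tplus_ofL c) (linear_tplus_ofL c).

Lemma bilinear_tmulL : bilinear_for *:%R *:%R tmulL.
Proof. by rewrite tmulLE; apply: bilinear_bilin_ext. Qed.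
HB.instance Definition _ :=
  bilinear_isBilinear.Build K TP TP TP _ _ tmulL bilinear_tmulL.

Lemma linear_PAL : linear PAL.
Proof. by rewrite PALE; apply: linear_lin_ext. Qed.
HB.instance Definition _ := GRing.isLinear.Build K TP TP _ PAL linear_PAL.

Lemma linear_embL : linear embL.
Proof. by rewrite embLE; apply: linear_lin_ext. Qed.
HB.instance Definition _ := GRing.isLinear.Build K TP T _ embL linear_embL.

Lemma tplus_ofU (c : A) w : tplus_ofL c << w >> = << (c, w) >>.
Proof. by rewrite tplus_ofLE; apply: lin_extU. Qed.

Lemma tmulU (p q : A * seq A) :
  tmulL << p >> << q >> = tplus_ofL (p.1 * q.1) (shL p.2 q.2).
Proof. by rewrite tmulLE tplus_ofLE shLE; apply: bilin_extU. Qed.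

Lemma PAU (p : A * seq A) : PAL << p >> = << (1, p.1 :: p.2) >>.
Proof. by rewrite PALE; apply: lin_extU. Qed.

Lemma embU (p : A * seq A) : embL << p >> = << p.1 :: p.2 >>.
Proof. by rewrite embLE; apply: lin_extU. Qed.

Lemma tmul_tplus_ofr (a c : A) u (S : T) :
  tmulL << (a, u) >> (tplus_ofL c S) = tplus_ofL (a * c) (shuffleL << u >> S).
Proof. by move: S; on_basis => w; rewrite tplus_ofU tmulU shuffleU. Qed.

Lemma tmul_tplus_ofl (b c : A) v (S : T) :
  tmulL (tplus_ofL c S) << (b, v) >> = tplus_ofL (c * b) (shuffleL S << v >>).
Proof. by move: S; on_basis => w; rewrite tplus_ofU tmulU shuffleU. Qed.

Lemma PA_tplus_of (c : A) (S : T) : PAL (tplus_ofL c S) = tplus_ofL 1 (consmL c S).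
Proof. by move: S; on_basis => w; rewrite tplus_ofU PAU consmU tplus_ofU. Qed.

Lemma emb_tplus_of (c : A) (S : T) : embL (tplus_ofL c S) = consmL c S.
Proof. by move: S; on_basis => w; rewrite tplus_ofU embU consmU. Qed.

Lemma tmulA (x y z : TP) : tmulL x (tmulL y z) = tmulL (tmulL x y) z.
Proof.
move: x; on_basis => -[a u]; move: y; on_basis => -[b v]; move: z; on_basis => -[c w].
by rewrite !tmulU /= tmul_tplus_ofr tmul_tplus_ofl sh_assoc mulrA.
Qed.

Lemma tmulC (x y : TP) : tmulL x y = tmulL y x.
Proof.
move: x; on_basis => -[a u]; move: y; on_basis => -[b v].
by rewrite !tmulU /= mulrC shC.
Qed.

Lemma tmul1 (x : TP) : tmulL (tone A) x = x.
Proof. by move: x; on_basis => -[b v]; rewrite tmulU /= mul1r sh_nil_l tplus_ofU. Qed.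

Lemma tmul_TD (x y : TP) :
  tmulL (PAL x) (PAL y) =
  PAL (tmulL (PAL x) y + tmulL x (PAL y)) - PAL (tmulL (tmulL x (PAL (tone A))) y).
Proof.
move: x; on_basis => -[a u]; move: y; on_basis => -[b v].
rewrite /tone !PAU !tmulU /= sh_1r tplus_ofU tmulU /= sh_cons1l linearD /=.
rewrite !PA_tplus_of !mul1r !mulr1 -!linearD -linearB /=.
by rewrite sh_cons (addrC (consmL b _)).
Qed.
End TensorPlus.

Section WellDefined.
Variables (K : fieldType) (A : comAlgType K).
Local Notation T := (Tfree A).
Local Notation TP := (Tplus A).

(* The product of T^+(A) transported along [emb]; the empty word is not in the
   image of [emb] and is sent to 0. *)
Definition tmulw (u v : seq A) : T :=
  match u, v with
  | a :: u', b :: v' => consmL (a * b) (shL u' v')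
  | _, _ => 0
  end.

Fact tmulT_key : unit. Proof. by []. Qed.
Definition tmulT := locked_with tmulT_key (bilin_ext tmulw).

Lemma bilinear_tmulT : bilinear_for *:%R *:%R tmulT.
Proof. by rewrite /tmulT locked_withE; apply: bilinear_bilin_ext. Qed.
HB.instance Definition _ := bilinear_isBilinear.Build K T T T _ _ tmulT bilinear_tmulT.

Lemma tmulTU (u v : seq A) : tmulT << u >> << v >> = tmulw u v.
Proof. by rewrite /tmulT locked_withE bilin_extU. Qed.

Lemma tmulTC (x y : T) : tmulT x y = tmulT y x.
Proof.
move: x; on_basis => u; move: y; on_basis => v.
by rewrite !tmulTU; case: u v => [|a u] [|b v] //=; rewrite mulrC shC.
Qed.

Lemma emb_tmul (x y : TP) : embL (tmulL x y) = tmulT (embL x) (embL y).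
Proof.
move: x; on_basis => -[a u]; move: y; on_basis => -[b v].
by rewrite tmulU !embU tmulTU /= emb_tplus_of.
Qed.

Lemma emb_PA (x : TP) : embL (PAL x) = consmL 1 (embL x).
Proof. by move: x; on_basis => -[a u]; rewrite PAU !embU consmU. Qed.

Lemma in_N_tmulTl (X Y : T) : in_N X -> in_N (tmulT X Y).
Proof.
move=> NX; move: Y; apply: in_N_linear_basis; first by linearity.
move=> v; move: X NX; apply: linear_preserves_N; first by linearity.
  move=> w1 w2 x y; rewrite !linearBl /= !tmulTU.
  case: v => [|b v]; first by case: w1 => [|a w1]; rewrite /= !subrr; apply: N_zero.
  case: w1 => [|a w1] /=; first by rewrite mulrDl; apply: consm_letterD_N.
  by rewrite -!linearB; apply/in_N_consm/sh_letterD_N.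
move=> w1 w2 k x; rewrite linearBl linearZl_LR /= !tmulTU.
case: v => [|b v]; first by case: w1 => [|a w1]; rewrite /= scaler0 subrr; apply: N_zero.
case: w1 => [|a w1] /=; first by rewrite -scalerAl; apply: consm_letterZ_N.
by rewrite -linearZZ -linearB; apply/in_N_consm/sh_letterZ_N.
Qed.

Lemma tequivE (x y : TP) : tequiv x y <-> in_N (embL (x - y)).
Proof. by rewrite embLE. Qed.

Lemma tequiv_refl (x : TP) : tequiv x x.
Proof. by apply/tequivE; rewrite subrr linear0; apply: N_zero. Qed.

Lemma tmul_tequiv (x x' y y' : TP) :
  tequiv x x' -> tequiv y y' -> tequiv (tmulL x y) (tmulL x' y').
Proof.
move=> /tequivE Nx /tequivE Ny; apply/tequivE.
have -> : tmulL x y - tmulL x' y' = tmulL (x - x') y + tmulL x' (y - y').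
  by rewrite linearBl linearBr /= addrA subrK.
rewrite linearD /= !emb_tmul; apply: N_plus; first exact: in_N_tmulTl.
by rewrite tmulTC; apply: in_N_tmulTl.
Qed.

Lemma iAD_tequiv (a b : A) : tequiv (iA (a + b)) (iA a + iA b).
Proof.
apply/tequivE; rewrite linearB linearD /= !embU opprD addrA.
exact: (N_add [::] [::]).
Qed.

Lemma iAZ_tequiv (k : K) (a : A) : tequiv (iA (k *: a)) (k *: iA a).
Proof.
by apply/tequivE; rewrite linearB linearZZ /= !embU; apply: (N_scale [::] [::]).
Qed.

Lemma iAM (a b : A) : iA (a * b) = tmulL (iA a) (iA b).
Proof. by rewrite /iA tmulU sh_nil_l tplus_ofU. Qed.

Lemma PA_tequiv (x x' : TP) : tequiv x x' -> tequiv (PAL x) (PAL x').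
Proof. by move=> /tequivE Nx; apply/tequivE; rewrite -linearB emb_PA; apply: in_N_consm. Qed.
End WellDefined.

Section UniversalProperty.
Variables (K : fieldType) (A B : comAlgType K) (P : {linear B -> B}).
Hypothesis P_TD : TD_identity P.
Variable phi : {lrmorphism A -> B}.
Local Notation T := (Tfree A).
Local Notation TP := (Tplus A).

(* [Pword w] is the image of 1_A (x) w. *)
Fixpoint Pword (w : seq A) : B := if w is b :: w' then P (phi b * Pword w') else 1.

Definition lift_pair (p : A * seq A) : B := phi p.1 * Pword p.2.
Definition lift : TP -> B := lin_ext lift_pair.
Definition PwordT : T -> B := lin_ext Pword.

HB.instance Definition _ := GRing.isLinear.Build K TP B _ lift (linear_lin_ext _).
HB.instance Definition _ := GRing.isLinear.Build K T B _ PwordT (linear_lin_ext _).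

Lemma linear_mull (c : B) : linear (fun x : B => c * x).
Proof. by move=> k x y; rewrite mulrDr scalerAr. Qed.

Lemma linear_mulr (c : B) : linear (fun x : B => x * c).
Proof. by move=> k x y; rewrite mulrDl scalerAl. Qed.

#[local] Hint Resolve linear_mull linear_mulr : linearity.

Lemma PwordT_consm (c : A) (S : T) : PwordT (consmL c S) = P (phi c * PwordT S).
Proof. by move: S; on_basis => w; rewrite consmU /PwordT !lin_extU. Qed.

(* The TD identity with y = 1 gives P (P s) = P s * P 1. *)
Lemma P_Pword w : P (Pword w) = Pword w * P 1.
Proof.
case: w => [|b w] /=; first by rewrite mul1r.
by rewrite P_TD !mulr1 linearD addrK.
Qed.

Lemma P_PwordT (S : T) : P (PwordT S) = PwordT S * P 1.
Proof. by move: S; on_basis => w; rewrite /PwordT lin_extU P_Pword. Qed.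

Lemma PwordT_sh (u v : seq A) : PwordT (shL u v) = Pword u * Pword v.
Proof.
elim: u v => [|a u IHu] v; first by rewrite sh_nil_l /PwordT lin_extU mul1r.
elim: v => [|b v IHv]; first by rewrite sh_nil_r /PwordT lin_extU mulr1.
rewrite sh_cons linearB linearD /= !PwordT_consm IHu IHv rmorph1 mul1r P_PwordT IHu.
rewrite [Pword (a :: u)]/= [Pword (b :: v)]/= P_TD linearD [X in _ = X - _]addrC rmorphM.
by congr (P _ + P _ - P _); ring.
Qed.

Lemma lift_tplus_of (c : A) (S : T) : lift (tplus_ofL c S) = phi c * PwordT S.
Proof. by move: S; on_basis => w; rewrite tplus_ofU /lift /PwordT !lin_extU. Qed.

Lemma lift_tmul (x y : TP) : lift (tmulL x y) = lift x * lift y.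
Proof.
move: x; on_basis => -[a u]; move: y; on_basis => -[b v].
by rewrite tmulU lift_tplus_of PwordT_sh /lift !lin_extU /lift_pair /= rmorphM; ring.
Qed.

Lemma lift_tone : lift (tone A) = 1.
Proof. by rewrite /lift lin_extU /lift_pair /= rmorph1 mulr1. Qed.

Lemma lift_PA (x : TP) : lift (PAL x) = P (lift x).
Proof.
by move: x; on_basis => -[a u]; rewrite PAU /lift !lin_extU /lift_pair /= rmorph1 mul1r.
Qed.

Lemma lift_iA (a : A) : lift (iA a) = phi a.
Proof. by rewrite /lift lin_extU /lift_pair /= mulr1. Qed.

Lemma lift_cons (a b : A) w : lift << (a, b :: w) >> = phi a * P (lift << (b, w) >>).
Proof. by rewrite /lift !lin_extU. Qed.

Lemma Pword_letterD w1 w2 (x y : A) :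
  Pword (w1 ++ (x + y) :: w2) = Pword (w1 ++ x :: w2) + Pword (w1 ++ y :: w2).
Proof.
elim: w1 => [|a w1 IH] /=; first by rewrite rmorphD mulrDl linearD.
by rewrite IH mulrDr linearD.
Qed.

Lemma Pword_letterZ w1 w2 k (x : A) :
  Pword (w1 ++ (k *: x) :: w2) = k *: Pword (w1 ++ x :: w2).
Proof.
elim: w1 => [|a w1 IH] /=; first by rewrite linearZZ -scalerAl linearZZ.
by rewrite IH -scalerAr linearZZ.
Qed.

(* [lift] transported along [emb]; the empty word is not in the image of [emb]. *)
Definition lift_word (w : seq A) : B := if w is a :: w' then phi a * Pword w' else 0.
Definition liftT : T -> B := lin_ext lift_word.
HB.instance Definition _ := GRing.isLinear.Build K T B _ liftT (linear_lin_ext _).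

Lemma lift_word_letterD w1 w2 (x y : A) :
  lift_word (w1 ++ (x + y) :: w2) = lift_word (w1 ++ x :: w2) + lift_word (w1 ++ y :: w2).
Proof.
case: w1 => [|a w1] /=; first by rewrite rmorphD mulrDl.
by rewrite Pword_letterD mulrDr.
Qed.

Lemma lift_word_letterZ w1 w2 k (x : A) :
  lift_word (w1 ++ (k *: x) :: w2) = k *: lift_word (w1 ++ x :: w2).
Proof.
case: w1 => [|a w1] /=; first by rewrite linearZZ scalerAl.
by rewrite Pword_letterZ scalerAr.
Qed.

Lemma liftT_N (X : T) : in_N X -> liftT X = 0.
Proof.
elim=> [w1 w2 x y|w1 w2 k x||x y _ Nx _ Ny|k x _ Nx].
- by rewrite !linearB /= /liftT !lin_extU lift_word_letterD -addrA -opprD subrr.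
- by rewrite linearB linearZZ /= /liftT !lin_extU lift_word_letterZ subrr.
- exact: linear0.
- by rewrite linearD /= Nx Ny addr0.
- by rewrite linearZZ /= Nx scaler0.
Qed.

Lemma lift_emb (x : TP) : lift x = liftT (embL x).
Proof. by move: x; on_basis => -[a u]; rewrite embU /lift /liftT !lin_extU. Qed.

Lemma lift_tequiv (x y : TP) : tequiv x y -> lift x = lift y.
Proof.
move=> /tequivE Nxy; apply/eqP; rewrite -subr_eq0 -linearB /=.
by rewrite lift_emb liftT_N.
Qed.

Lemma lift_unique (g : TP -> B) : linear g ->
    (forall x y, g (tmulL x y) = g x * g y) -> (forall x, g (PAL x) = P (g x)) ->
    (forall a, g (iA a) = phi a) ->
  g =1 lift.
Proof.
move=> g_linear gM gP gi; apply: linear_eq_on_basis => //; first by linearity.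
move=> [a w]; elim: w a => [|b w IH] a; first by rewrite gi lift_iA.
have -> : << (a, b :: w) >> = tmulL (iA a) (PAL << (b, w) >>).
  by rewrite PAU /iA tmulU /= mulr1 sh_nil_l tplus_ofU.
by rewrite gM gP gi IH lift_tmul lift_PA lift_iA.
Qed.
End UniversalProperty.

Theorem theorem4p8 (K : fieldType) (charK0 : [pchar K] =i pred0)
  (A : comAlgType K) :
  [/\ forall x x' y y' : Tplus A, tequiv x x' -> tequiv y y' ->
        tequiv (tmul x y) (tmul x' y'),
      forall x x' : Tplus A, tequiv x x' -> tequiv (PA x) (PA x'),
      forall x y z : Tplus A, tequiv (tmul x (tmul y z)) (tmul (tmul x y) z),
      forall x y : Tplus A, tequiv (tmul x y) (tmul y x)
    & forall x : Tplus A, tequiv (tmul (tone A) x) x] /\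
  (forall x y : Tplus A,
        tequiv (tmul (PA x) (PA y))
               (PA (tmul (PA x) y + tmul x (PA y))
                - PA (tmul (tmul x (PA (tone A))) y))) /\
  [/\ forall a b : A, tequiv (iA (a + b)) (iA a + iA b),
      forall (k : K) (a : A), tequiv (iA (k *: a)) (k *: iA a),
      forall a b : A, tequiv (iA (a * b)) (tmul (iA a) (iA b))
    & iA 1 = tone A] /\
  (forall (B : comAlgType K) (P : {linear B -> B}),
     TD_identity P ->
     forall phi : {lrmorphism A -> B},
     exists f : Tplus A -> B,
       [/\ TD_morphism P f,
           forall a : A, f (iA a) = phi a,
           forall (a b : A) (w : seq A),
             f << (a, b :: w) >> = phi a * P (f << (b, w) >>)
         & forall g : Tplus A -> B, TD_morphism P g ->
             (forall a : A, g (iA a) = phi a) -> forall x, g x = f x]).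
Proof.
rewrite -tmulLE -PALE; split; [|split; [|split]].
- split=> [||x y z|x y|x]; [exact: tmul_tequiv | exact: PA_tequiv | | |].
  + by rewrite tmulA; apply: tequiv_refl.
  + by rewrite tmulC; apply: tequiv_refl.
  + by rewrite tmul1; apply: tequiv_refl.
- by move=> x y; rewrite tmul_TD; apply: tequiv_refl.
- split=> // [||a b]; [exact: iAD_tequiv | exact: iAZ_tequiv |].
  by rewrite iAM; apply: tequiv_refl.
- move=> B P P_TD phi; exists (lift P phi); split.
  + split; [exact: lift_tequiv | exact: linear_lin_ext | | exact: lift_tone |].
      by rewrite -tmulLE; apply: lift_tmul.
    by rewrite -PALE; apply: lift_PA.
  + exact: lift_iA.
  + exact: lift_cons.
  + move=> g [_ g_linear gM _ gP] gi; apply: lift_unique => //.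
      by rewrite tmulLE.
    by rewrite PALE.
Qed.
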